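(* There is a positive absolute constant $C_0$ such that for every $n\geq 2$, every domain $D$ in $\mathbb{R}^n$ such that $\mathbb{R}^n\setminus D$ contains at least two points, and all $z,w\in D$, $$d''_D(z,w)\leq d'_D(z,w)\leq d_D(z,w)\leq C_0\, d''_D(z,w).$$
   Context: Write $d(z,\partial D)=\inf\{|z-a|:a\in\partial D\}$ and $Q(z;a,b)=|z-a|\big(1+\big|\log\frac{|a-b|}{|z-a|}\big|\big)$ (equal to $+\infty$ when $a=b$). For $z\in D$ define $1/\lambda_D(z)=\inf\{Q(z;a,b): a,b\in\mathbb{R}^n\setminus D\}$, $1/\lambda'_D(z)=\inf\{Q(z;a,b): a,b\in\partial D\}$, $1/\lambda''_D(z)=\inf\{Q(z;a,b): a,b\in\partial D,\ |z-a|=d(z,\partial D)\}$. For $z,w\in D$ set $d_D(z,w)=\inf_\gamma\int_\gamma\lambda_D(t)|dt|$, $d'_D(z,w)=\inf_\gamma\int_\gamma\lambda'_D(t)|dt|$, $d''_D(z,w)=\inf_\gamma\int_\gamma\lambda''_D(t)|dt|$, the infima over all rectifiable arcs $\gamma$ joining $z$ to $w$ in $D$. *)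

(* R : realType, points of R^n are row vectors 'rV[R]_n
   with the EUCLIDEAN norm defined below. *)
From HB Require Import structures.
From mathcomp Require Import all_boot all_order all_algebra.
From mathcomp Require Import all_classical all_reals all_analysis.
Set Implicit Arguments. Unset Strict Implicit. Unset Printing Implicit Defensive.
Import Order.TTheory GRing.Theory Num.Theory.
Import numFieldNormedType.Exports.
Local Open Scope classical_set_scope.
Local Open Scope ring_scope.

Section Defs.
Context {R : realType} {n : nat}.
Implicit Types (x y z a b : 'rV[R]_n) (D : set 'rV[R]_n).

Definition enorm x : R := Num.sqrt (\sum_(i < n) (x ord0 i) ^+ 2).

Definition bdry D : set 'rV[R]_n := closure D `\` interior D.

Definition dist_bdry D z : R := inf [set enorm (z - a) | a in bdry D].

(* Q(z;a,b) for a <> b  (Q = +oo when a = b; such pairs are excluded from the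
   infima below, which is the same as allowing the value +oo) *)
Definition Qf z a b : R := enorm (z - a) * (1 + `| ln (enorm (a - b) / enorm (z - a)) |).

Definition inv_lam D z : R :=
  inf [set r | exists a b, [/\ ~ D a, ~ D b, a <> b & r = Qf z a b]].
Definition inv_lam' D z : R :=
  inf [set r | exists a b, [/\ bdry D a, bdry D b, a <> b & r = Qf z a b]].
Definition inv_lam'' D z : R :=
  inf [set r | exists a b, [/\ bdry D a, enorm (z - a) = dist_bdry D z,
                               bdry D b, a <> b & r = Qf z a b]].

Definition lam D z : R := (inv_lam D z)^-1.
Definition lam' D z : R := (inv_lam' D z)^-1.
Definition lam'' D z : R := (inv_lam'' D z)^-1.

Definition curve_length (g : R -> 'rV[R]_n) (s t : R) : \bar R :=
  ereal_sup [set x | exists (k : nat) (p : nat -> R),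
    [/\ p 0%N = s, p k = t, (forall i, (i < k)%N -> p i <= p i.+1) &
        x = (\sum_(i < k) enorm (g (p i.+1) - g (p i)))%:E]].

Definition arclength_arc D z w (g : R -> 'rV[R]_n) (L : R) : Prop :=
  [/\ 0 <= L, g 0 = z /\ g L = w,
      (forall s, 0 <= s <= L -> D (g s)),
      ({in `[0, L] &, injective g}) &
      (forall s t, 0 <= s -> s <= t -> t <= L -> curve_length g s t = (t - s)%:E)].

Definition line_integral (f : 'rV[R]_n -> R) (g : R -> 'rV[R]_n) (L : R) : \bar R :=
  (\int[lebesgue_measure]_(s in `[0%R, L]%classic) (f (g s))%:E)%E.

Definition dens_metric (f : 'rV[R]_n -> R) D z w : \bar R :=
  ereal_inf [set x | exists (g : R -> 'rV[R]_n) (L : R),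
    arclength_arc D z w g L /\ x = line_integral f g L].

Definition dD D := dens_metric (lam D) D.
Definition dD' D := dens_metric (lam' D) D.
Definition dD'' D := dens_metric (lam'' D) D.

End Defs.

From HB Require Import structures.
From mathcomp Require Import all_boot all_order all_algebra.
From mathcomp Require Import all_classical all_reals all_analysis.
From mathcomp Require Import ring lra.
Set Implicit Arguments. Unset Strict Implicit. Unset Printing Implicit Defensive.
Import Order.TTheory GRing.Theory Num.Theory.
Import numFieldNormedType.Exports.
Local Open Scope classical_set_scope.
Local Open Scope ring_scope.

(* Let a0 be a boundary point nearest to z and d = |z - a0|.  Points outside
   the open set D are at distance at least d from z, so all three infima are
   at least d > 0; boundary points lie outside D, so the infima increase from
   1/lambda to 1/lambda''.  Conversely, let a, b lie outside D and s = |a - b|.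
   One of them lies at distance at least s/2 from a0, and since n >= 2, z can
   be joined to it by a polygon staying in an annulus around a0 whose inner
   radius is comparable to min(d, s); that polygon meets the boundary at some
   b', and an elementary estimate on t |-> d (1 + |ln (t/d)|) gives
   Q(z;a0,b') <= 4 Q(z;a,b).  Hence lambda'' <= lambda' <= lambda <= 4 lambda''
   on D, and these bounds integrate along every arc. *)

Section LogInequality.
Context {R : realType}.

Definition qlog (r s : R) : R := r * (1 + `|ln (s / r)|).

Lemma ln_le_sub1 (y : R) : 0 < y -> ln y <= y - 1.
Proof.
by move=> y0; have := @le_ln1Dx R (y - 1); rewrite [1 + _]addrC subrK; apply; lra.
Qed.

Lemma ln4_le3 : ln (4 : R) <= 3.
Proof. by apply: le_trans (ln_le_sub1 _) _; lra. Qed.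

Lemma norm_ln_div_le (d r s t : R) : 0 < d -> d <= r -> 0 < s ->
  Num.min d s / 4 <= t -> t <= 3 * r + s ->
  `|ln (t / d)| <= 3 + ln (r / d) + `|ln (s / r)|.
Proof.
move=> d0 dr s0 t_ge t_le.
have r0 : 0 < r := lt_le_trans d0 dr.
have m0 : 0 < Num.min d s by rewrite lt_min d0.
have t0 : 0 < t by apply: lt_le_trans t_ge; rewrite divr_gt0.
have pos x : 0 < x -> x \is Num.pos by [].
have ln4 := ln4_le3; have ln4_ge0 : 0 <= ln (4 : R) by apply: ln_ge0; lra.
have ln_dr : ln d <= ln r by rewrite ler_ln ?pos.
have lnt_ge : ln (Num.min d s) - ln 4 <= ln t.
  by rewrite -ln_div ?pos // ler_ln ?pos ?divr_gt0.
have lnt_le : ln t <= ln 4 + ln (Num.max r s).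
  have M0 : 0 < Num.max r s by rewrite lt_max r0.
  rewrite -lnM ?pos // ler_ln ?pos ?mulr_gt0 //; apply: le_trans t_le _.
  have rM : r <= Num.max r s by rewrite le_max lexx.
  have sM : s <= Num.max r s by rewrite le_max lexx orbT.
  lra.
have lnsr_le := ler_norm (ln s - ln r).
have lnrs_le : ln r - ln s <= `|ln s - ln r| by rewrite distrC ler_norm.
rewrite !ln_div ?pos // ler_norml; apply/andP; split.
  by have [/min_l|/ltW/min_r] := leP d s => mE; rewrite mE in lnt_ge; lra.
by have [/max_r|/ltW/max_l] := leP r s => ME; rewrite ME in lnt_le; lra.
Qed.

Lemma qlog_le (d r s t : R) : 0 < d -> d <= r -> 0 < s ->
  Num.min d s / 4 <= t -> t <= 3 * r + s -> qlog d t <= 4 * qlog r s.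
Proof.
move=> d0 dr s0 t_ge t_le; rewrite /qlog.
have r0 : 0 < r := lt_le_trans d0 dr.
have lnt := ler_wpM2l (ltW d0) (norm_ln_div_le d0 dr s0 t_ge t_le).
set A := `|ln (s / r)| in lnt *; have A0 : 0 <= A := normr_ge0 _.
have lnr : d * ln (r / d) <= r - d.
  have := ler_wpM2l (ltW d0) (ln_le_sub1 (divr_gt0 r0 d0)).
  by rewrite mulrBr mulrCA divff ?gt_eqF // !mulr1.
have dA : d * A <= r * A by rewrite ler_wpM2r.
have rA : 0 <= r * A := mulr_ge0 (ltW r0) A0.
rewrite !mulrDr in lnt *; lra.
Qed.

End LogInequality.

Section Euclidean.
Context {R : realType} {n : nat}.
Implicit Types (u v w x y z a b c : 'rV[R]_n) (D : set 'rV[R]_n).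

Definition dotp u v : R := \sum_(i < n) u ord0 i * v ord0 i.

Lemma dotpC u v : dotp u v = dotp v u.
Proof. by apply: eq_bigr => i _; rewrite mulrC. Qed.

Lemma dotpDl u v w : dotp (u + v) w = dotp u w + dotp v w.
Proof. by rewrite /dotp -big_split; apply: eq_bigr => i _; rewrite !mxE mulrDl. Qed.

Lemma dotpZl k u v : dotp (k *: u) v = k * dotp u v.
Proof. by rewrite /dotp mulr_sumr; apply: eq_bigr => i _; rewrite !mxE mulrA. Qed.

Lemma dotpNl u v : dotp (- u) v = - dotp u v.
Proof. by rewrite -scaleN1r dotpZl mulN1r. Qed.

Lemma dotpBl u v w : dotp (u - v) w = dotp u w - dotp v w.
Proof. by rewrite dotpDl dotpNl. Qed.

Lemma dotpDr u v w : dotp w (u + v) = dotp w u + dotp w v.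
Proof. by rewrite dotpC dotpDl !(dotpC w). Qed.

Lemma dotpZr k u v : dotp u (k *: v) = k * dotp u v.
Proof. by rewrite dotpC dotpZl dotpC. Qed.

Lemma dotpNr u v : dotp u (- v) = - dotp u v.
Proof. by rewrite dotpC dotpNl dotpC. Qed.

Lemma dotpBr u v w : dotp w (u - v) = dotp w u - dotp w v.
Proof. by rewrite dotpDr dotpNr. Qed.

Lemma dotp_ge0 u : 0 <= dotp u u.
Proof. by apply: sumr_ge0 => i _; rewrite -expr2 sqr_ge0. Qed.

Lemma sqr_dotp_le u v : dotp u v ^+ 2 <= dotp u u * dotp v v.
Proof.
set A := dotp u u; set B := dotp u v; set C := dotp v v.
have A0 : 0 <= A := dotp_ge0 u; have C0 : 0 <= C := dotp_ge0 v.
(* |C u - B v|^2 = C (A C - B^2) and |B u - A v|^2 = A (A C - B^2); when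
   A = C = 0, |u - v|^2 and |u + v|^2 force B = 0. *)
have expand p q :
    dotp (p *: u - q *: v) (p *: u - q *: v) = p ^+ 2 * A - 2 * p * q * B + q ^+ 2 * C.
  rewrite !(dotpBl, dotpBr, dotpZl, dotpZr) -/A -/B -/C (dotpC v u) -/B; ring.
have hC := dotp_ge0 (C *: u - B *: v); rewrite expand in hC.
have hA := dotp_ge0 (B *: u - A *: v); rewrite expand in hA.
have h1 := dotp_ge0 (1 *: u - 1 *: v); rewrite expand in h1.
have h2 := dotp_ge0 (1 *: u - (- 1) *: v); rewrite expand in h2.
have [Cp|C_le0] := ltP 0 C; first nra.
have [Ap|A_le0] := ltP 0 A; first nra.
nra.
Qed.

Lemma enormE u : enorm u = Num.sqrt (dotp u u).
Proof. by rewrite /enorm; congr Num.sqrt; apply: eq_bigr => i _; rewrite expr2. Qed.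

Lemma enorm_ge0 u : 0 <= enorm u.
Proof. by rewrite enormE sqrtr_ge0. Qed.

Lemma sqr_enorm u : enorm u ^+ 2 = dotp u u.
Proof. by rewrite enormE sqr_sqrtr // dotp_ge0. Qed.

Lemma enorm_le_sqr u (c : R) : 0 <= c -> dotp u u <= c ^+ 2 -> enorm u <= c.
Proof.
by move=> c0; rewrite -sqr_enorm ler_pXn2r ?nnegrE ?enorm_ge0.
Qed.

Lemma enorm_ge_sqr u (c : R) : 0 <= c -> c ^+ 2 <= dotp u u -> c <= enorm u.
Proof.
by move=> c0; rewrite -sqr_enorm ler_pXn2r ?nnegrE ?enorm_ge0.
Qed.

Lemma enorm0 : enorm (0 : 'rV[R]_n) = 0.
Proof. by rewrite enormE /dotp big1 ?sqrtr0 // => i _; rewrite mxE mul0r. Qed.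

Lemma enormZ k u : enorm (k *: u) = `|k| * enorm u.
Proof.
by rewrite !enormE dotpZl dotpZr mulrA -expr2 sqrtrM ?sqr_ge0 // sqrtr_sqr.
Qed.

Lemma enormN u : enorm (- u) = enorm u.
Proof. by rewrite -scaleN1r enormZ normrN normr1 mul1r. Qed.

Lemma enormB u v : enorm (u - v) = enorm (v - u).
Proof. by rewrite -enormN opprB. Qed.

Lemma norm_dotp_le u v : `|dotp u v| <= enorm u * enorm v.
Proof.
rewrite -(ler_pXn2r (_ : (0 < 2)%N)) ?nnegrE ?mulr_ge0 ?enorm_ge0 //.
by rewrite real_normK ?num_real // exprMn !sqr_enorm sqr_dotp_le.
Qed.

Lemma enormD u v : enorm (u + v) <= enorm u + enorm v.
Proof.
apply: enorm_le_sqr; first by rewrite addr_ge0 ?enorm_ge0.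
rewrite !(dotpDl, dotpDr) (dotpC v u) sqrrD !sqr_enorm.
by have := norm_dotp_le u v; rewrite ler_norml => /andP[_]; lra.
Qed.

Lemma enorm_sub_le u v w : enorm (u - w) <= enorm (u - v) + enorm (v - w).
Proof. by rewrite (_ : u - w = (u - v) + (v - w)) ?enormD // addrA subrK. Qed.

Lemma enorm_lipschitz u v : `|enorm u - enorm v| <= enorm (u - v).
Proof.
have := enorm_sub_le u v 0; have := enorm_sub_le v u 0.
by rewrite !subr0 (enormB v u) ler_norml => ? ?; apply/andP; split; lra.
Qed.

Lemma coord_le_enorm u i : `|u ord0 i| <= enorm u.
Proof.
apply: enorm_ge_sqr => //; rewrite real_normK ?num_real // /dotp (bigD1 i) //=.
by rewrite expr2 lerDl; apply: sumr_ge0 => j _; rewrite -expr2 sqr_ge0.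
Qed.

Lemma enorm_eq0 u : (enorm u == 0) = (u == 0).
Proof.
apply/idP/eqP => [/eqP u0|->]; last by rewrite enorm0.
apply/rowP => i; rewrite mxE; apply/normr0_eq0/eqP.
by rewrite eq_le normr_ge0 andbT -u0 coord_le_enorm.
Qed.

Lemma enorm_sub_gt0 u v : u <> v -> 0 < enorm (u - v).
Proof. by move/eqP; rewrite lt_def enorm_ge0 enorm_eq0 subr_eq0 andbT. Qed.

Lemma enorm_le_mx_norm u : enorm u <= Num.sqrt n%:R * `|u|.
Proof.
apply: enorm_le_sqr; first by rewrite mulr_ge0 ?sqrtr_ge0.
rewrite exprMn sqr_sqrtr //.
have -> : n%:R * `|u| ^+ 2 = \sum_(i < n) `|u| ^+ 2.
  by rewrite sumr_const card_ord mulr_natl.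
apply: ler_sum => i _; rewrite -expr2 -real_normK ?num_real // ler_pXn2r ?nnegrE //.
by rewrite -[`|u|]/(mx_norm u) mx_normrE; apply: le_trans (le_bigmax _ _ (ord0, i)).
Qed.

Lemma continuous_enorm : continuous (@enorm R n).
Proof.
move=> x; apply/(@cvgrPdist_lt _ _ _ _ (@nbhs_filter _ x)) => e e0.
set k := Num.sqrt (n%:R : R) + 1.
have k0 : 0 < k by rewrite ltr_wpDl ?sqrtr_ge0.
near=> y.
have : ball x (e / k) y by near: y; apply: nbhsx_ballx; rewrite divr_gt0.
rewrite -ball_normE /= ltr_pdivlMr // => xy.
apply: le_lt_trans (enorm_lipschitz _ _) _; apply: le_lt_trans (enorm_le_mx_norm _) _.
have := sqrtr_ge0 (n%:R : R); have := normr_ge0 (x - y); rewrite /k in xy; nra.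
Unshelve. all: by end_near.
Qed.

Lemma continuous_enorm_sub z : continuous (fun x => enorm (z - x)).
Proof.
move=> x; apply: (@continuous_comp _ _ _ (fun x => z - x) (@enorm R n)).
  exact: (@cvgB _ _ _ _ (@nbhs_filter _ x)) (cvg_cst _) cvg_id.
exact: continuous_enorm.
Qed.

End Euclidean.

Lemma path_exit (T : Type) (P : T -> Prop) (e : rel T) x l :
  P x -> ~ P (last x l) -> path e x l -> exists p q, [/\ e p q, P p & ~ P q].
Proof.
elim: l x => [|y l IH] x Px /=; first by move/(_ Px).
move=> Nl /andP[exy yl]; have [Py|Ny] := pselect (P y); last by exists x, y.
exact: IH Py Nl yl.
Qed.

Section Boundary.
Context {R : realType} {n : nat}.
Implicit Types (u v w x y z a b c : 'rV[R]_n) (D : set 'rV[R]_n).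

Lemma open_bdry_notin D a : open D -> bdry D a -> ~ D a.
Proof. by move=> /interior_id oD [_]; rewrite oD. Qed.

Lemma closed_bdry D : closed (bdry D).
Proof.
rewrite /bdry setDE; apply: closedI; first exact: closed_closure.
exact/open_closedC/open_interior.
Qed.

Lemma segment_meets_bdry D x y : open D -> D x -> ~ D y ->
  exists t, [/\ 0 <= t, t <= 1 & bdry D (x + t *: (y - x))].
Proof.
move=> oD Dx Ny; apply: contrapT => no_bdry.
pose f t : 'rV[R]_n := x + t *: (y - x).
have f_cont : continuous f.
  by move=> t; apply: cvgD; [exact: cvg_cst | apply: cvgZr_tmp; exact: cvg_id].
have f_conn : connected (f @` `[0, 1]).
  apply: connected_continuous_connected; first exact: segment_connected.
  exact: continuous_subspaceT.
have sep : separated D (~` closure D).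
  split; first by rewrite setICr.
  apply/seteqP; split => // p [Dp cp].
  have : (closure D)° p.
    by move: oD; rewrite openE => /(_ p Dp); apply: interiorS; apply: subset_closure.
  by have := interiorC (~` closure D); rewrite setCK => ->; apply.
have f_sub : f @` `[0, 1] `<=` D `|` ~` closure D.
  move=> _ [t + <-]; rewrite /= in_itv /= => /andP[t0 t1].
  have [Dp|NDp] := pselect (D (f t)); [by left | right => cp].
  by apply: no_bdry; exists t; split => //; split => //; move/interior_id : oD => ->.
have f0 : f 0 = x by rewrite /f scale0r addr0.
have f1 : f 1 = y by rewrite /f scale1r addrC subrK.
have i0 : (0 : R) \in `[0, 1] by rewrite in_itv /= ler01 lexx.
have i1 : (1 : R) \in `[0, 1] by rewrite in_itv /= ler01 lexx.
case: (connected_subset sep f_sub f_conn) => img.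
  by apply: Ny; rewrite -f1; apply: img; exists 1.
by apply: (img x); [rewrite -f0; exists 0 | apply: subset_closure].
Qed.

Lemma exists_nearest_bdry D z : bdry D !=set0 ->
  exists a0, bdry D a0 /\ forall b, bdry D b -> enorm (z - a0) <= enorm (z - b).
Proof.
case=> p bp; set c := enorm (z - p).
pose M := enorm z + c.
pose A := bdry D `&` [set x | enorm (z - x) <= c].
have A_closed : closed A.
  apply: closedI; first exact: closed_bdry.
  apply: (@preimage_closed _ _ (fun x => enorm (z - x)) [set r | r <= c]).
    by move=> x _; exact: continuous_enorm_sub.
  exact: closed_le.
have A_compact : compact A.
  have box : compact [set v : 'rV[R]_n | forall i, v ord0 i \in `[(- M), M]].
    by apply: (@rV_compact _ _ (fun=> `[(- M), M]%classic)) => _; apply: segment_compact.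
  apply: subclosed_compact A_closed box _ => x [_ /= zx] i /=.
  rewrite in_itv /= -ler_norml; apply: le_trans (coord_le_enorm _ _) _.
  by have := enorm_sub_le x z 0; rewrite !subr0 (enormB x z) /M; lra.
have A0 : A !=set0 by exists p; split => //=; rewrite lexx.
have dist_cont : {within A, continuous (fun x => enorm (z - x))}.
  by apply: continuous_subspaceT; exact: continuous_enorm_sub.
have [a0 /set_mem[ba0 za0] a0_min] := EVT_min_rV A0 A_compact dist_cont.
exists a0; split => // b bb.
have [zb|/ltW zb] := leP (enorm (z - b)) c; last exact: le_trans zb.
by apply: a0_min; rewrite inE.
Qed.

Lemma dist_bdryE D z a0 : bdry D a0 ->
  (forall b, bdry D b -> enorm (z - a0) <= enorm (z - b)) ->
  dist_bdry D z = enorm (z - a0).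
Proof.
move=> ba0 a0_min; apply/eqP; rewrite eq_le; apply/andP; split.
  apply: ge_inf; last by exists a0.
  by exists 0 => _ [b _ <-]; exact: enorm_ge0.
by apply: lb_le_inf; [exists (enorm (z - a0)), a0 | move=> _ [b bb <-]; exact: a0_min].
Qed.

End Boundary.

Section Annulus.
Context {R : realType} {n : nat}.
Implicit Types (u v w x y z a b c : 'rV[R]_n) (D : set 'rV[R]_n).

Definition in_annulus a0 (m M : R) p := m <= enorm (p - a0) <= M.

Definition annulus_link a0 (m M : R) p q :=
  [&& 0 <= dotp (p - a0) (q - a0), in_annulus a0 m M p & in_annulus a0 m M q].

Lemma enorm_convex_ge u v (t m : R) : 0 <= dotp u v -> 0 <= t <= 1 -> 0 <= m ->
  m <= enorm u -> m <= enorm v -> m / 2 <= enorm ((1 - t) *: u + t *: v).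
Proof.
move=> uv /andP[t0 t1] m0 mu mv; apply: enorm_ge_sqr; first by rewrite divr_ge0.
(* The cross term is nonnegative and (1 - t)^2 + t^2 >= 1/2. *)
rewrite !(dotpDl, dotpDr, dotpZl, dotpZr) (dotpC v u) expr_div_n.
have mu2 : m ^+ 2 <= dotp u u by rewrite -sqr_enorm ler_pXn2r ?nnegrE ?enorm_ge0.
have mv2 : m ^+ 2 <= dotp v v by rewrite -sqr_enorm ler_pXn2r ?nnegrE ?enorm_ge0.
have t1' : 0 <= 1 - t by rewrite subr_ge0.
have := mulr_ge0 (mulr_ge0 t1' t0) uv.
have := ler_wpM2l (sqr_ge0 (1 - t)) mu2; have := ler_wpM2l (sqr_ge0 t) mv2.
have := mulr_ge0 (sqr_ge0 (t - 1 / 2)) (sqr_ge0 m).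
nra.
Qed.

Lemma enorm_convex_le u v (t M : R) : 0 <= t <= 1 ->
  enorm u <= M -> enorm v <= M -> enorm ((1 - t) *: u + t *: v) <= M.
Proof.
move=> /andP[t0 t1] uM vM; apply: le_trans (enormD _ _) _.
by rewrite !enormZ !ger0_norm ?subr_ge0 //; nra.
Qed.

Lemma annulus_link_segment a0 (m M t : R) p q : 0 <= m ->
  annulus_link a0 m M p q -> 0 <= t <= 1 -> in_annulus a0 (m / 2) M (p + t *: (q - p)).
Proof.
move=> m0 /and3P[pq /andP[mp pM] /andP[mq qM]] t01; rewrite /in_annulus.
have -> : p + t *: (q - p) - a0 = (1 - t) *: (p - a0) + t *: (q - a0).
  by apply/rowP => j; rewrite !mxE; ring.
by apply/andP; split; [apply: enorm_convex_ge | apply: enorm_convex_le].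
Qed.

Lemma exists_orthogonal p : (2 <= n)%N ->
  exists w, [/\ dotp p w = 0, enorm p / 2 <= enorm w & enorm w <= enorm p].
Proof.
move=> n2; set d := enorm p; have d0 : 0 <= d := enorm_ge0 p.
have [->|dn0] := eqVneq d 0.
  by exists 0; rewrite /dotp big1 ?enorm0 ?mul0r // => i _; rewrite mxE mulr0.
pose i0 : 'I_n := Ordinal (ltnW n2); pose i1 : 'I_n := Ordinal n2.
(* Among two coordinates one carries at most half of the squared norm. *)
have [k pk] : exists k : 'I_n, p ord0 k ^+ 2 <= d ^+ 2 / 2.
  have : p ord0 i0 ^+ 2 + p ord0 i1 ^+ 2 <= d ^+ 2.
    rewrite sqr_enorm /dotp (bigD1 i0) //= (bigD1 i1) //= addrA -!expr2 lerDl.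
    by apply: sumr_ge0 => j _; rewrite -expr2 sqr_ge0.
  by have [|] := leP (p ord0 i0 ^+ 2) (d ^+ 2 / 2); [exists i0 | exists i1; lra].
pose e := \row_(j < n) ((j == k)%:R : R).
have dotp_e q : dotp q e = q ord0 k.
  rewrite /dotp (bigD1 k) //= big1 ?addr0 => [|j /negbTE jk]; rewrite mxE ?eqxx ?jk.
    by rewrite mulr1.
  by rewrite mulr0.
have pp : dotp p p = d ^+ 2 by rewrite sqr_enorm.
(* d times the component of e orthogonal to p *)
pose w := d *: e - (p ord0 k / d) *: p.
have ww : dotp w w = d ^+ 2 - p ord0 k ^+ 2.
  rewrite /w !(dotpBl, dotpBr, dotpZl, dotpZr) !dotp_e (dotpC e) dotp_e pp mxE eqxx /=.
  by field.
exists w; split.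
- by rewrite /w dotpBr !dotpZr dotp_e pp; field.
- apply: enorm_ge_sqr; first by rewrite divr_ge0.
  by rewrite ww expr_div_n; have := sqr_ge0 d; lra.
- by apply: enorm_le_sqr => //; rewrite ww; have := sqr_ge0 (p ord0 k); lra.
Qed.

Lemma bdry_in_annulus D z c a0 : (2 <= n)%N -> open D -> D z -> ~ D c ->
  exists b, bdry D b /\ in_annulus a0
    (Num.min (enorm (z - a0) / 2) (enorm (c - a0)) / 2)
    (enorm (z - a0) + enorm (c - a0)) b.
Proof.
move=> n2 oD Dz Nc.
set d := enorm (z - a0); set dc := enorm (c - a0).
set m := Num.min (d / 2) dc; set M := d + dc.
have d0 : 0 <= d := enorm_ge0 _; have dc0 : 0 <= dc := enorm_ge0 _.
have md : m <= d / 2 by rewrite /m ge_min lexx.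
have mdc : m <= dc by rewrite /m ge_min lexx orbT.
have m0 : 0 <= m by rewrite /m le_min divr_ge0.
(* A polygon from z to c with all its links in the annulus crosses the boundary there. *)
suff [l [lc zl]] : exists l, last z l = c /\ path (annulus_link a0 m M) z l.
  have Nl : ~ D (last z l) by rewrite lc.
  have [p [q [pq Dp Nq]]] := path_exit Dz Nl zl.
  have [t [t0 t1 bt]] := segment_meets_bdry oD Dp Nq.
  by exists (p + t *: (q - p)); split => //; apply: annulus_link_segment; rewrite ?t0.
have z_ann : in_annulus a0 m M z by rewrite /in_annulus -/d /M; apply/andP; split; lra.
have c_ann : in_annulus a0 m M c by rewrite /in_annulus -/dc /M; apply/andP; split; lra.
have [zc|zc] := leP 0 (dotp (z - a0) (c - a0)).
  by exists [:: c]; rewrite /= /annulus_link zc z_ann c_ann.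
(* Otherwise go around a0 via a0 + w, with w orthogonal to z - a0, and the
   antipode of z. *)
have [w [zw w_ge w_le]] := exists_orthogonal (z - a0) n2; rewrite -/d in w_ge w_le.
have ew : a0 + w - a0 = w by rewrite addrC addKr.
have ez : a0 - (z - a0) - a0 = - (z - a0) by rewrite addrC addKr.
have w_ann : in_annulus a0 m M (a0 + w).
  by rewrite /in_annulus ew /M; apply/andP; split; lra.
have z'_ann : in_annulus a0 m M (a0 - (z - a0)).
  by move: z_ann; rewrite /in_annulus ez enormN.
exists [:: a0 + w; a0 - (z - a0); c]; split => //=.
rewrite /annulus_link z_ann w_ann z'_ann c_ann ew ez zw dotpNr dotpC zw dotpNl.
by rewrite oppr0 lexx oppr_ge0 ltW.
Qed.

End Annulus.

(* The densities need not be measurable along an arc, so these are proved from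
   the definition of the integral as a supremum over simple functions. *)
Section NonnegIntegral.
Local Open Scope ereal_scope.
Context d (T : measurableType d) (R : realType).
Variables (mu : {measure set T -> \bar R}) (D : set T).

Lemma le_ge0_integral (f1 f2 : T -> \bar R) :
  (forall x, D x -> 0 <= f1 x <= f2 x) ->
  \int[mu]_(x in D) f1 x <= \int[mu]_(x in D) f2 x.
Proof.
move=> f12.
have f10 x : D x -> 0 <= f1 x by move/f12/andP=> [].
have f20 x : D x -> 0 <= f2 x by move/f12/andP=> [/le_trans]; apply.
rewrite !ge0_integralE //; apply: ereal_sup_le => _ [u fu <-]; exists u => // x.
apply: le_trans (fu x) _; rewrite /patch; case: ifP => // /set_mem.
by move/f12/andP=> [].
Qed.

Lemma ge0_integralZl_le (f : T -> R) (k : R) : (0 < k)%R ->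
  (forall x, D x -> (0 <= f x)%R) ->
  \int[mu]_(x in D) (k * f x)%:E <= k%:E * \int[mu]_(x in D) (f x)%:E.
Proof.
move=> k0 f0.
have kf0 x : D x -> 0 <= (k * f x)%:E by move=> Dx; rewrite lee_fin mulr_ge0 ?f0 ?ltW.
have f0E x : D x -> 0 <= (f x)%:E by move=> Dx; rewrite lee_fin f0.
rewrite !ge0_integralE //.
apply: ge_ereal_sup => _ [u fu <-].
have kV0 : (0 <= k^-1)%R by rewrite invr_ge0 ltW.
pose v := scale_nnsfun u kV0.
have -> : HBNNSimple.NonNegSimpleFun.sort u =
    (cst k \* HBNNSimple.NonNegSimpleFun.sort v)%R.
  by apply/funext => x /=; rewrite mulrA divff ?mul1r ?gt_eqF.
rewrite sintegralrM; apply: lee_wpmul2l; first by rewrite lee_fin ltW.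
apply: ereal_sup_ubound; exists v => // x; have := fu x.
rewrite /patch /v /=; case: ifP => _; rewrite !lee_fin.
  by rewrite ler_pdivrMl // mulrC.
by move=> u0; rewrite mulr_ge0_le0 // ltW.
Qed.

End NonnegIntegral.

Section DensityMetrics.
Context {R : realType} {n : nat}.
Implicit Types (z w : 'rV[R]_n) (f : 'rV[R]_n -> R) (D : set 'rV[R]_n).
Local Open Scope ereal_scope.

Lemma arclength_arcD D z w g L s : arclength_arc D z w g L ->
  (0 <= s)%R -> (s <= L)%R -> D (g s).
Proof. by case=> _ _ gD _ _ s0 sL; apply: gD; rewrite s0 sL. Qed.

Lemma le_dens_metric f1 f2 D z w : (forall x, D x -> 0 <= f1 x <= f2 x)%R ->
  dens_metric f1 D z w <= dens_metric f2 D z w.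
Proof.
move=> f12; apply: le_ereal_inf_tmp => _ [g [L [arc ->]]].
apply: le_trans (ereal_inf_lbound _) _; first by exists g, L.
apply: le_ge0_integral => s /=; rewrite in_itv /= => /andP[s0 sL].
by rewrite !lee_fin; apply: f12; exact: arclength_arcD arc s0 sL.
Qed.

Lemma dens_metricZ_le f D z w (k : R) : (0 < k)%R -> (forall x, D x -> 0 <= f x)%R ->
  dens_metric (fun x => k * f x)%R D z w <= k%:E * dens_metric f D z w.
Proof.
move=> k0 f0; rewrite -ereal_inf_pZl //.
apply: le_ereal_inf_tmp => _ [_ [g [L [arc ->]]] <-].
apply: le_trans (ereal_inf_lbound _) _; first by exists g, L.
apply: ge0_integralZl_le => // s /=; rewrite in_itv /= => /andP[s0 sL].
by apply: f0; exact: arclength_arcD arc s0 sL.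
Qed.

End DensityMetrics.

Lemma inf_le_subset (R : realType) (A B : set R) :
  has_lbound A -> B !=set0 -> B `<=` A -> inf A <= inf B.
Proof. by move=> lA B0 BA; apply: lb_le_inf => // x /BA; exact: ge_inf. Qed.

Section Densities.
Context {R : realType} {n : nat}.
Implicit Types (x y z a b c : 'rV[R]_n).

Lemma QfE z a b : Qf z a b = qlog (enorm (z - a)) (enorm (a - b)).
Proof. by []. Qed.

Lemma Qf_ge z a b : enorm (z - a) <= Qf z a b.
Proof.
by rewrite /Qf -[X in X <= _]mulr1 ler_wpM2l ?enorm_ge0 // lerDl normr_ge0.
Qed.

Lemma Qf_ge0 z a b : 0 <= Qf z a b.
Proof. exact: le_trans (enorm_ge0 _) (Qf_ge _ _ _). Qed.

Variable D : set 'rV[R]_n.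
Hypotheses (n2 : (2 <= n)%N) (oD : open D).

Section NearestBoundaryPoint.
Variables (z a0 : 'rV[R]_n).
Hypotheses (Dz : D z) (ba0 : bdry D a0)
  (a0_min : forall b, bdry D b -> enorm (z - a0) <= enorm (z - b)).

Lemma nearest_bdry_le c : ~ D c -> enorm (z - a0) <= enorm (z - c).
Proof.
move=> Nc; have [t [t0 t1 bt]] := segment_meets_bdry oD Dz Nc.
apply: le_trans (a0_min bt) _.
rewrite opprD addrA subrr sub0r enormN enormZ ger0_norm // enormB.
by rewrite -[X in _ <= X]mul1r ler_wpM2r ?enorm_ge0.
Qed.

Lemma nearest_bdry_gt0 : 0 < enorm (z - a0).
Proof.
by apply: enorm_sub_gt0 => za0; move: Dz; rewrite za0; exact: open_bdry_notin ba0.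
Qed.

Lemma Qf_nearest_le a b : ~ D a -> ~ D b -> a <> b ->
  exists b', [/\ bdry D b', a0 <> b' & Qf z a0 b' <= 4 * Qf z a b].
Proof.
move=> Na Nb ab.
set d := enorm (z - a0); set r := enorm (z - a); set s := enorm (a - b).
have d0 : 0 < d := nearest_bdry_gt0.
have s0 : 0 < s := enorm_sub_gt0 ab.
have dr : d <= r := nearest_bdry_le Na.
have [c [Nc c_ge c_le]] : exists c,
    [/\ ~ D c, s / 2 <= enorm (c - a0) & enorm (c - a0) <= r + s + d].
  have := enorm_sub_le a z a0; rewrite (enormB a z) -/r -/d => aa0.
  have [sa|sb] := leP (s / 2) (enorm (a - a0)); first by exists a; split => //; lra.
  exists b; split => //.
    by have := enorm_sub_le a a0 b; rewrite -/s (enormB a0 b); lra.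
  by have := enorm_sub_le b a a0; rewrite (enormB b a) -/s; lra.
have [b' [bb' /andP[t_ge t_le]]] := bdry_in_annulus a0 n2 oD Dz Nc.
rewrite -/d in t_ge t_le.
have md : Num.min d s <= d by rewrite ge_min lexx.
have ms : Num.min d s <= s by rewrite ge_min lexx orbT.
have m_le : Num.min d s / 2 <= Num.min (d / 2) (enorm (c - a0)).
  by rewrite le_min; apply/andP; split; lra.
have m0 : 0 < Num.min d s by rewrite lt_min d0.
have t0 : 0 < enorm (b' - a0) by lra.
exists b'; split => //; first by move=> a0b'; rewrite a0b' subrr enorm0 ltxx in t0.
by rewrite !QfE -/r -/s (enormB a0 b'); apply: qlog_le => //; lra.
Qed.

End NearestBoundaryPoint.

Lemma inv_lam_cmp z : (exists a b, a <> b /\ ~ D a /\ ~ D b) -> D z ->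
  [/\ 0 < inv_lam D z, inv_lam D z <= inv_lam' D z,
      inv_lam' D z <= inv_lam'' D z & inv_lam'' D z <= 4 * inv_lam D z].
Proof.
move=> [a1 [b1 [ab1 [Na1 Nb1]]]] Dz.
have [a0 [ba0 a0_min]] : exists a0, bdry D a0 /\
    forall b, bdry D b -> enorm (z - a0) <= enorm (z - b).
  have [t [_ _ bt]] := segment_meets_bdry oD Dz Na1.
  by apply: exists_nearest_bdry; eexists; exact: bt.
pose S := [set r | exists a b, [/\ ~ D a, ~ D b, a <> b & r = Qf z a b]].
pose S' := [set r | exists a b, [/\ bdry D a, bdry D b, a <> b & r = Qf z a b]].
pose S'' := [set r | exists a b, [/\ bdry D a, enorm (z - a) = dist_bdry D z,
                                    bdry D b, a <> b & r = Qf z a b]].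
have witness a b : ~ D a -> ~ D b -> a <> b -> exists2 y, S'' y & y <= 4 * Qf z a b.
  move=> Na Nb ab; have [b' [bb' a0b' Qle]] := Qf_nearest_le Dz ba0 a0_min Na Nb ab.
  by exists (Qf z a0 b') => //; exists a0, b'; rewrite (dist_bdryE ba0 a0_min).
have S''S' : S'' `<=` S' by move=> _ [a [b [ba _ bb ab ->]]]; exists a, b.
have S'S : S' `<=` S.
  move=> _ [a [b [ba bb ab ->]]].
  by exists a, b; split => //; apply: open_bdry_notin oD _.
have lbS (E : set R) : E `<=` S -> has_lbound E.
  by move=> ES; exists 0 => _ /ES [a [b [_ _ _ ->]]]; exact: Qf_ge0.
have [y S''y _] := witness a1 b1 Na1 Nb1 ab1.
have S'0 : S' !=set0 by exists y; exact: S''S'.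
rewrite (_ : inv_lam D z = inf S) // (_ : inv_lam' D z = inf S') //.
rewrite (_ : inv_lam'' D z = inf S'') //.
split.
- apply: lt_le_trans (nearest_bdry_gt0 Dz ba0) _.
  apply: lb_le_inf; first by exists y; exact/S'S/S''S'.
  move=> _ [a [b [Na _ _ ->]]].
  exact: le_trans (nearest_bdry_le Dz a0_min Na) (Qf_ge z a b).
- exact: inf_le_subset (lbS S (@subset_refl _ S)) S'0 S'S.
- exact: inf_le_subset (lbS _ S'S) (ex_intro _ y S''y) S''S'.
have : inf S'' / 4 <= inf S.
  apply: lb_le_inf; first by exists y; exact/S'S/S''S'.
  move=> _ [a [b [Na Nb ab ->]]]; have [y' S''y' y'_le] := witness a b Na Nb ab.
  by have := ge_inf (lbS _ (subset_trans S''S' S'S)) S''y'; lra.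
lra.
Qed.

Lemma lam_cmp z : (exists a b, a <> b /\ ~ D a /\ ~ D b) -> D z ->
  [/\ 0 <= lam'' D z, lam'' D z <= lam' D z, lam' D z <= lam D z
    & lam D z <= 4 * lam'' D z].
Proof.
move=> ab Dz; have [l0 ll' l'l'' l''l] := inv_lam_cmp ab Dz.
have pos (q : R) : 0 < q -> q \is Num.pos by [].
have l'0 : 0 < inv_lam' D z := lt_le_trans l0 ll'.
have l''0 : 0 < inv_lam'' D z := lt_le_trans l'0 l'l''.
rewrite /lam /lam' /lam'' invr_ge0 (ltW l''0) !lef_pV2 ?pos //; split => //.
rewrite -[4 * _]invf_div lef_pV2 ?pos ?divr_gt0 //; lra.
Qed.

End Densities.

Theorem lemma6 (R : realType) :
  exists C0 : R, 0 < C0 /\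
  forall (n : nat) (D : set 'rV[R]_n), (2 <= n)%N ->
    open D -> connected D ->
    (exists a b : 'rV[R]_n, a <> b /\ ~ D a /\ ~ D b) ->
    forall z w : 'rV[R]_n, D z -> D w ->
      [/\ (dD'' D z w <= dD' D z w)%E,
          (dD' D z w <= dD D z w)%E &
          (dD D z w <= C0%:E * dD'' D z w)%E].
Proof.
exists 4; split=> // n D n2 oD _ ab z w _ _.
have cmp x : D x -> _ := lam_cmp n2 oD ab.
have lam''0 x : D x -> 0 <= lam'' D x by case/cmp.
split.
- by apply: le_dens_metric => x /cmp[? ? _ _]; apply/andP.
- apply: le_dens_metric => x /cmp[l''0 l''l' l'l _].
  by rewrite l'l andbT (le_trans l''0).
apply: le_trans _ (dens_metricZ_le z w _ lam''0) => //.
apply: le_dens_metric => x /cmp[l''0 l''l' l'l ->].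
by rewrite andbT (le_trans l''0) // (le_trans l''l').
Qed.
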